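(* Let $(M,\diamond,\bullet,\alpha_M)$ be a module over the multiplicative Hom-post-Lie algebra $(L,[\cdot,\cdot],\cdot,\alpha)$, and let $k,n$ be non-negative integers. Define $x\diamond^{0,k}m=\alpha_M^{2^k-1}(\alpha^n(x)\diamond m)$ and $x\bullet^{0,k}m=\alpha_M^{2^k-1}(\alpha^n(x)\bullet m)$ for $x\in L$, $m\in M$. Then $(M,\diamond^{0,k},\bullet^{0,k},\alpha_M^{2^k})$ is a module over $(L,\alpha^{2^k-1}\circ[\cdot,\cdot],\alpha^{2^k-1}\circ\cdot,\alpha^{2^k})$.
   Context: All vector spaces are over a field $\mathbb{K}$ of characteristic $\neq 2$. A Hom-Lie algebra is $(L,[\cdot,\cdot],\alpha)$ with $[\cdot,\cdot]$ bilinear skew-symmetric, $\alpha$ linear, and $[\alpha(x),[y,z]]+[\alpha(y),[z,x]]+[\alpha(z),[x,y]]=0$. A Hom-post-Lie algebra $(L,[\cdot,\cdot],\cdot,\alpha)$ is a Hom-Lie algebra with bilinear $\cdot$ such that $\alpha(z)\cdot[x,y]-[z\cdot x,\alpha(y)]-[\alpha(x),z\cdot y]=0$ and $\alpha(z)\cdot(y\cdot x)-\alpha(y)\cdot(z\cdot x)+(y\cdot z)\cdot\alpha(x)-(z\cdot y)\cdot\alpha(x)+[y,z]\cdot\alpha(x)=0$ for all $x,y,z$; it is multiplicative if $\alpha([x,y])=[\alpha(x),\alpha(y)]$ and $\alpha(x\cdot y)=\alpha(x)\cdot\alpha(y)$. A module over $L$ is a vector space $M$ with linear $\alpha_M$ and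 bilinear $\diamond,\bullet:L\otimes M\to M$ such that for all $x,y\in L,m\in M$: (i) $\alpha_M(x\diamond m)=\alpha(x)\diamond\alpha_M(m)$, $\alpha_M(x\bullet m)=\alpha(x)\bullet\alpha_M(m)$; (ii) $[x,y]\diamond\alpha_M(m)=\alpha(x)\diamond(y\diamond m)-\alpha(y)\diamond(x\diamond m)$; (iii) $(x\cdot y)\diamond\alpha_M(m)=\alpha(x)\bullet(y\diamond m)-\alpha(y)\diamond(x\bullet m)$; (iv) $[x,y]\bullet\alpha_M(m)=\alpha(x)\bullet(y\bullet m)-\alpha(y)\bullet(x\bullet m)-(x\cdot y)\bullet\alpha_M(m)+(y\cdot x)\bullet\alpha_M(m)$. The same definition applies to the Hom-post-Lie algebra $(L,\alpha^{2^k-1}\circ[\cdot,\cdot],\alpha^{2^k-1}\circ\cdot,\alpha^{2^k})$. *)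

From HB Require Import structures.
From mathcomp Require Import all_boot all_order all_algebra.
Set Implicit Arguments. Unset Strict Implicit. Unset Printing Implicit Defensive.
Import GRing.Theory.
Local Open Scope ring_scope.

Section HomPostLie.
Variables (K : fieldType) (L M : lmodType K).

Definition is_lin (V W : lmodType K) (f : V -> W) :=
  forall (a : K) (x y : V), f (a *: x + y) = a *: f x + f y.

Definition is_bilin (A B C : lmodType K) (f : A -> B -> C) :=
  (forall (a : K) (x y : A) (z : B), f (a *: x + y) z = a *: f x z + f y z) /\
  (forall (a : K) (x : A) (y z : B), f x (a *: y + z) = a *: f x y + f x z).

Definition is_HomLie (br : L -> L -> L) (al : L -> L) :=
  [/\ is_bilin br, is_lin al,
      (forall x y, br x y = - br y x) &
      (forall x y z, br (al x) (br y z) + br (al y) (br z x) + br (al z) (br x y) = 0)].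

Definition is_HomPostLie (br dot : L -> L -> L) (al : L -> L) :=
  [/\ is_HomLie br al, is_bilin dot,
      (forall x y z, dot (al z) (br x y) - br (dot z x) (al y) - br (al x) (dot z y) = 0) &
      (forall x y z, dot (al z) (dot y x) - dot (al y) (dot z x)
                     + dot (dot y z) (al x) - dot (dot z y) (al x)
                     + dot (br y z) (al x) = 0)].

Definition is_multiplicative (br dot : L -> L -> L) (al : L -> L) :=
  (forall x y, al (br x y) = br (al x) (al y)) /\
  (forall x y, al (dot x y) = dot (al x) (al y)).

Definition is_module (br dot : L -> L -> L) (al : L -> L)
  (dia bul : L -> M -> M) (alM : M -> M) :=
  [/\ is_lin alM, is_bilin dia, is_bilin bul,
      (forall x m, alM (dia x m) = dia (al x) (alM m)) /\
      (forall x m, alM (bul x m) = bul (al x) (alM m)) &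
      [/\ (forall x y m, dia (br x y) (alM m) = dia (al x) (dia y m) - dia (al y) (dia x m)),
          (forall x y m, dia (dot x y) (alM m) = bul (al x) (dia y m) - dia (al y) (bul x m)) &
          (forall x y m, bul (br x y) (alM m) = bul (al x) (bul y m) - bul (al y) (bul x m)
                       - bul (dot x y) (alM m) + bul (dot y x) (alM m))]].

End HomPostLie.

(* Both twists are transported through the module axioms by multiplicativity:
   [alpha^n] is a morphism of [[.,.]] and [.], so precomposing the actions with
   it preserves (ii)-(iv); and [alpha^N], [alpha_M^N] intertwine the actions, so
   Yau's twist by [alpha^N] and [alpha_M^N] rescales every axiom by the same
   power. Since [2^k = (2^k - 1) + 1], the theorem is the Yau twist with
   [N = 2^k - 1] of the module precomposed with [alpha^n]. *)
From mathcomp Require Import all_boot all_order all_algebra.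
Set Implicit Arguments. Unset Strict Implicit.
Local Open Scope ring_scope.
Import GRing.Theory.

Section Linear.
Variables (K : fieldType) (V W : lmodType K) (f : V -> W).
Hypothesis lin_f : is_lin f.

Lemma linD x y : f (x + y) = f x + f y.
Proof. by have := lin_f 1 x y; rewrite !scale1r. Qed.

Lemma linB x y : f (x - y) = f x - f y.
Proof. by rewrite addrC -scaleN1r lin_f scaleN1r addrC. Qed.

End Linear.

Lemma iter_lin (K : fieldType) (V : lmodType K) (f : V -> V) j :
  is_lin f -> is_lin (iter j f).
Proof. by move=> lin_f; elim: j => [|j IH] a x y //=; rewrite IH lin_f. Qed.

Lemma iterC (T : Type) a b (f : T -> T) x :
  iter a f (iter b f x) = iter b f (iter a f x).
Proof. by rewrite -!iterD addnC. Qed.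

Lemma iter_morph2 (A B C : Type) (fa : A -> A) (fb : B -> B) (fc : C -> C)
    (g : A -> B -> C) :
  (forall x y, fc (g x y) = g (fa x) (fb y)) ->
  forall j x y, iter j fc (g x y) = g (iter j fa x) (iter j fb y).
Proof. by move=> g_morph; elim=> [|j IH] x y //=; rewrite IH g_morph. Qed.

Section ModuleTwists.
Variables (K : fieldType) (L M : lmodType K).
Variables (br dot : L -> L -> L) (al : L -> L).
Variables (dia bul : L -> M -> M) (alM : M -> M).
Hypotheses (lin_al : is_lin al) (mult : is_multiplicative br dot al).
Hypothesis modM : is_module br dot al dia bul alM.

Lemma module_precomp_iter n :
  is_module br dot al (fun x m => dia (iter n al x) m)
            (fun x m => bul (iter n al x) m) alM.
Proof.
move: mult modM => [mbr mdot] [lin_alM [diaL diaR] [bulL bulR] [alM_dia alM_bul]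
  [dia_br dia_dot bul_br]].
have ibr := iter_morph2 mbr n; have idot := iter_morph2 mdot n.
have lin_iter := iter_lin n lin_al.
have al_iter x : iter n al (al x) = al (iter n al x) by rewrite -iterSr.
split=> //.
- by split=> a x y z; rewrite ?lin_iter (diaL, diaR).
- by split=> a x y z; rewrite ?lin_iter (bulL, bulR).
- by split=> x m; rewrite al_iter (alM_dia, alM_bul).
- split=> x y m; rewrite !al_iter.
  + by rewrite ibr dia_br.
  + by rewrite idot dia_dot.
  + by rewrite ibr !idot bul_br.
Qed.

Lemma module_Yau_twist N :
  is_module (fun x y => iter N al (br x y)) (fun x y => iter N al (dot x y))
            (iter N.+1 al)
            (fun x m => iter N alM (dia x m)) (fun x m => iter N alM (bul x m))
            (iter N.+1 alM).
Proof.
move: mult modM => [mbr mdot] [lin_alM [diaL diaR] [bulL bulR] [alM_dia alM_bul]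
  [dia_br dia_dot bul_br]].
have ibr := iter_morph2 mbr N; have idot := iter_morph2 mdot N.
have idia := iter_morph2 alM_dia; have ibul := iter_morph2 alM_bul.
have lin_iter := iter_lin N lin_alM.
split.
- exact: iter_lin.
- by split=> a x y z; rewrite (diaL, diaR) lin_iter.
- by split=> a x y z; rewrite (bulL, bulR) lin_iter.
- by split=> x m; rewrite (iterC N.+1) (idia, ibul).
- split=> x y m.
  + by rewrite ibr !iterS dia_br (linB lin_iter) !idia.
  + by rewrite idot !iterS dia_dot (linB lin_iter) !idia !ibul.
  + by rewrite ibr !idot !iterS bul_br (linD lin_iter) !(linB lin_iter) !ibul.
Qed.

End ModuleTwists.

Theorem mainTheorem7 (K : fieldType) (L M : lmodType K)
  (br dot : L -> L -> L) (al : L -> L)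
  (dia bul : L -> M -> M) (alM : M -> M) (k n : nat) :
  (2%:R : K) != 0 ->
  is_HomPostLie br dot al ->
  is_multiplicative br dot al ->
  is_module br dot al dia bul alM ->
  is_module (fun x y => iter (2 ^ k - 1) al (br x y))
            (fun x y => iter (2 ^ k - 1) al (dot x y))
            (iter (2 ^ k) al)
            (fun x m => iter (2 ^ k - 1) alM (dia (iter n al x) m))
            (fun x m => iter (2 ^ k - 1) alM (bul (iter n al x) m))
            (iter (2 ^ k) alM).
Proof.
move=> _ [[_ lin_al _ _] _ _ _] mult modM.
have [N ->] : exists N, (2 ^ k = N.+1)%N.
  by exists (2 ^ k).-1; rewrite prednK // expn_gt0.
rewrite subn1.
exact: module_Yau_twist mult (module_precomp_iter lin_al mult modM n) _.
Qed.
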